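(* Let $\lambda>0$ and $S\in(0,\lambda]$ be a given spot price. For a company $j$ with parameters $\pi^0_j,\pi^1_j,\gamma_j>0$, $\mathrm{E}^{\mathrm{bau}}_j=\pi^0_j/\pi^1_j$, $\varrho_j=1/\pi^1_j+1/\gamma_j$ and $\lambda\varrho_j<\mathrm{E}^{\mathrm{bau}}_j$: (1) If company $c$ purchases certificates directly at the auction, its optimal demand is $\bm{\delta_c}(\bm{P_c}(S))=\bm{\delta_c}(S)=\mathrm{E}^{\mathrm{bau}}_c-S\varrho_c$. (2) If company $b$ purchases certificates through a financial intermediary, the intermediated price is $\bm{P_b}(S)=\tfrac12\big(S+\mathrm{E}^{\mathrm{bau}}_b/\varrho_b\big)\wedge\lambda$ and the resulting demand is $\bm{\delta_b}(\bm{P_b}(S))=\tfrac12(\mathrm{E}^{\mathrm{bau}}_b-S\varrho_b)\vee(\mathrm{E}^{\mathrm{bau}}_b-\lambda\varrho_b)$.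
   Context: Company $j$ facing certificate price $P$ maximizes $\pi^0_jq-\tfrac{\pi^1_j}2q^2-\tfrac{\gamma_j}2[(1-e^{-a})q]^2-\delta P-\lambda(e^{-a}q-\delta)^+$ over $(q,a,\delta)$; its optimal demand is $\bm{\delta_j}(P)=\mathrm{E}^{\mathrm{bau}}_j-P\varrho_j$. A company buying directly faces $\bm{P_c}(S)=S$. An intermediary buying at spot price $S$ sets the price $\bm{P_b}(S)$ maximizing its wealth $\bm{\delta_b}(P)(P-S)$ over the admissible interval $P\in[S,\lambda]$. $x\wedge y=\min(x,y)$, $x\vee y=\max(x,y)$. *)

From Stdlib Require Import Reals Lra.
Open Scope R_scope.

Definition Ebau (pi0 pi1 : R) : R := pi0 / pi1.
Definition rho (pi1 gam : R) : R := / pi1 + / gam.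

Definition demand (pi0 pi1 gam P : R) : R := Ebau pi0 pi1 - P * rho pi1 gam.

Definition objective (pi0 pi1 gam lam P q a d : R) : R :=
  pi0 * q - pi1 / 2 * q ^ 2 - gam / 2 * ((1 - exp (- a)) * q) ^ 2
  - d * P - lam * Rmax (exp (- a) * q - d) 0.

Definition is_optimal_demand (pi0 pi1 gam lam P d : R) : Prop :=
  exists q a : R, forall q' a' d' : R,
    objective pi0 pi1 gam lam P q' a' d' <= objective pi0 pi1 gam lam P q a d.

Definition Pc (S : R) : R := S.

Definition intermediary_wealth (pi0 pi1 gam S P : R) : R :=
  demand pi0 pi1 gam P * (P - S).

Definition is_intermediated_price (pi0 pi1 gam lam S P : R) : Prop :=
  S <= P <= lam /\
  forall P', S <= P' <= lam ->
    intermediary_wealth pi0 pi1 gam S P' <= intermediary_wealth pi0 pi1 gam S P.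

(* The firm's problem decouples once the certificate purchase is chosen well: as
   long as P <= lambda it is never worth paying the penalty, so buying exactly
   the residual emissions e^{-a} q is optimal, and writing x = (1 - e^{-a}) q for
   the abated emissions leaves the concave quadratic
   pi0 q - pi1/2 q^2 - gamma/2 x^2 - P (q - x), maximal at q = (pi0 - P)/pi1,
   x = P/gamma; its residual emissions are exactly the demand E^bau - P rho.
   The intermediary's wealth (E^bau - P rho)(P - S) is a downward parabola in P
   with vertex (S + E^bau/rho)/2 > S, so its maximiser over [S, lambda] is the
   vertex clipped at lambda, and the demand, being decreasing in P, turns the
   minimum into a maximum. *)
From Stdlib Require Import Reals Lra Psatz.
Open Scope R_scope.

Lemma rho_pos (pi1 gam : R) : 0 < pi1 -> 0 < gam -> 0 < rho pi1 gam.
Proof.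
  intros Hpi1 Hgam; unfold rho.
  assert (0 < / pi1) by (apply Rinv_0_lt_compat; lra).
  assert (0 < / gam) by (apply Rinv_0_lt_compat; lra).
  lra.
Qed.

Definition reduced_objective (pi0 pi1 gam P q x : R) : R :=
  pi0 * q - pi1 / 2 * q ^ 2 - gam / 2 * x ^ 2 - P * (q - x).

Lemma certificate_cost_ge (lam P d y : R) :
  0 <= P <= lam -> - d * P - lam * Rmax (y - d) 0 <= - P * y.
Proof. intros HP; unfold Rmax; destruct (Rle_dec (y - d) 0); nra. Qed.

Lemma objective_le_reduced (pi0 pi1 gam lam P q a d : R) :
  0 <= P <= lam ->
  objective pi0 pi1 gam lam P q a d
  <= reduced_objective pi0 pi1 gam P q ((1 - exp (- a)) * q).
Proof.
  intros HP; unfold objective, reduced_objective.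
  pose proof (certificate_cost_ge lam P d (exp (- a) * q) HP).
  lra.
Qed.

Lemma reduced_objective_max (pi0 pi1 gam P q x : R) :
  0 < pi1 -> 0 < gam ->
  reduced_objective pi0 pi1 gam P q x
  <= reduced_objective pi0 pi1 gam P ((pi0 - P) / pi1) (P / gam).
Proof.
  intros Hpi1 Hgam.
  set (qs := (pi0 - P) / pi1); set (xs := P / gam).
  assert (Hgap : reduced_objective pi0 pi1 gam P qs xs
                 - reduced_objective pi0 pi1 gam P q x
                 = pi1 / 2 * (q - qs) ^ 2 + gam / 2 * (x - xs) ^ 2).
  { unfold reduced_objective, qs, xs; field; lra. }
  assert (0 <= pi1 * (q - qs) ^ 2) by (apply Rmult_le_pos; [lra | apply pow2_ge_0]).
  assert (0 <= gam * (x - xs) ^ 2) by (apply Rmult_le_pos; [lra | apply pow2_ge_0]).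
  lra.
Qed.

Lemma demand_at_reduced_optimum (pi0 pi1 gam P : R) :
  0 < pi1 -> 0 < gam ->
  demand pi0 pi1 gam P = (pi0 - P) / pi1 - P / gam.
Proof. intros; unfold demand, Ebau, rho; field; lra. Qed.

Lemma demand_is_optimal (pi0 pi1 gam lam P : R) :
  0 < pi1 -> 0 < gam -> 0 <= P <= lam -> P * rho pi1 gam < Ebau pi0 pi1 ->
  is_optimal_demand pi0 pi1 gam lam P (demand pi0 pi1 gam P).
Proof.
  intros Hpi1 Hgam HP Hdem.
  set (qs := (pi0 - P) / pi1); set (xs := P / gam).
  assert (Hd : demand pi0 pi1 gam P = qs - xs)
    by exact (demand_at_reduced_optimum pi0 pi1 gam P Hpi1 Hgam).
  assert (Hd_pos : 0 < qs - xs) by (rewrite <- Hd; unfold demand; lra).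
  assert (Hxs : 0 <= xs) by (unfold xs, Rdiv; apply Rmult_le_pos; [lra | left; apply Rinv_0_lt_compat; lra]).
  (* choosing e^{-a} = (qs - xs)/qs makes the residual emissions equal the demand *)
  assert (Hexp : exp (- - ln ((qs - xs) / qs)) = (qs - xs) / qs).
  { rewrite Ropp_involutive; apply exp_ln, Rdiv_lt_0_compat; lra. }
  exists qs, (- ln ((qs - xs) / qs)).
  intros q' a' d'.
  assert (Hopt : objective pi0 pi1 gam lam P qs (- ln ((qs - xs) / qs)) (demand pi0 pi1 gam P)
                 = reduced_objective pi0 pi1 gam P qs xs).
  { unfold objective, reduced_objective; rewrite Hexp, Hd.
    replace ((qs - xs) / qs * qs - (qs - xs)) with 0 by (field; lra).
    replace ((1 - (qs - xs) / qs) * qs) with xs by (field; lra).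
    rewrite Rmax_right by lra.
    ring. }
  rewrite Hopt.
  eapply Rle_trans; [apply objective_le_reduced; exact HP |].
  apply reduced_objective_max; assumption.
Qed.

Lemma intermediary_wealth_vertex_form (pi0 pi1 gam S P : R) :
  0 < rho pi1 gam ->
  let P0 := (S + Ebau pi0 pi1 / rho pi1 gam) / 2 in
  intermediary_wealth pi0 pi1 gam S P
  = intermediary_wealth pi0 pi1 gam S P0 - rho pi1 gam * (P - P0) ^ 2.
Proof.
  intros Hr P0; unfold intermediary_wealth, demand, P0.
  field; lra.
Qed.

Lemma Rmin_sqr_dist_argmin (a b c P : R) :
  a <= b -> a <= c ->
  (a <= P <= b /\ forall P', a <= P' <= b -> (P - c) ^ 2 <= (P' - c) ^ 2)
  <-> P = Rmin c b.
Proof.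
  intros Hab Hac; unfold Rmin; destruct (Rle_dec c b) as [Hcb | Hcb]; split.
  - intros [HP Hmin]; specialize (Hmin c (conj Hac Hcb)); nra.
  - intros HP; subst P; split; [lra |]; intros P' _.
    rewrite Rminus_diag, pow_i by auto; apply pow2_ge_0.
  - intros [HP Hmin]; specialize (Hmin b (conj Hab (Rle_refl b))); nra.
  - intros ->; split; [lra |]; intros P' HP'; nra.
Qed.

Lemma spot_lt_price_vertex (pi0 pi1 gam S : R) :
  0 < rho pi1 gam -> S * rho pi1 gam < Ebau pi0 pi1 ->
  S < (S + Ebau pi0 pi1 / rho pi1 gam) / 2.
Proof.
  intros Hr HSE; apply Rmult_lt_reg_r with (rho pi1 gam); [exact Hr |].
  replace ((S + Ebau pi0 pi1 / rho pi1 gam) / 2 * rho pi1 gam)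
    with ((S * rho pi1 gam + Ebau pi0 pi1) / 2) by (field; lra).
  lra.
Qed.

Lemma is_intermediated_price_iff (pi0 pi1 gam lam S P : R) :
  0 < rho pi1 gam -> S <= lam -> S * rho pi1 gam < Ebau pi0 pi1 ->
  is_intermediated_price pi0 pi1 gam lam S P
  <-> P = Rmin ((S + Ebau pi0 pi1 / rho pi1 gam) / 2) lam.
Proof.
  intros Hr HSl HSE.
  set (P0 := (S + Ebau pi0 pi1 / rho pi1 gam) / 2).
  assert (HSP0 : S <= P0) by (left; apply spot_lt_price_vertex; assumption).
  rewrite <- (Rmin_sqr_dist_argmin S lam P0 P HSl HSP0).
  unfold is_intermediated_price.
  assert (Hwealth : forall P1 P2, intermediary_wealth pi0 pi1 gam S P1
                                  <= intermediary_wealth pi0 pi1 gam S P2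
                                  <-> (P2 - P0) ^ 2 <= (P1 - P0) ^ 2).
  { intros P1 P2; rewrite (intermediary_wealth_vertex_form _ _ _ _ P1 Hr),
      (intermediary_wealth_vertex_form _ _ _ _ P2 Hr); fold P0.
    split; intros H; nra. }
  split; intros [HP Hmax]; split; try exact HP; intros P' HP'; apply Hwealth, Hmax, HP'.
Qed.

Lemma demand_Rmin (pi0 pi1 gam x y : R) :
  0 < rho pi1 gam ->
  demand pi0 pi1 gam (Rmin x y) = Rmax (demand pi0 pi1 gam x) (demand pi0 pi1 gam y).
Proof.
  intros Hr; unfold demand, Rmin, Rmax.
  destruct (Rle_dec x y), (Rle_dec (Ebau pi0 pi1 - x * rho pi1 gam)
                                   (Ebau pi0 pi1 - y * rho pi1 gam)); nra.
Qed.

Theorem propositionA1 (lam S pi0c pi1c gamc pi0b pi1b gamb : R) :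
  0 < lam -> 0 < S <= lam ->
  0 < pi0c -> 0 < pi1c -> 0 < gamc -> lam * rho pi1c gamc < Ebau pi0c pi1c ->
  0 < pi0b -> 0 < pi1b -> 0 < gamb -> lam * rho pi1b gamb < Ebau pi0b pi1b ->
  (* (1) direct purchase *)
  (is_optimal_demand pi0c pi1c gamc lam (Pc S) (demand pi0c pi1c gamc (Pc S)) /\
   demand pi0c pi1c gamc (Pc S) = demand pi0c pi1c gamc S /\
   demand pi0c pi1c gamc S = Ebau pi0c pi1c - S * rho pi1c gamc) /\
  (* (2) purchase through an intermediary *)
  (forall P, is_intermediated_price pi0b pi1b gamb lam S P <->
     P = Rmin ((S + Ebau pi0b pi1b / rho pi1b gamb) / 2) lam) /\
  is_optimal_demand pi0b pi1b gamb lam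
     (Rmin ((S + Ebau pi0b pi1b / rho pi1b gamb) / 2) lam)
     (demand pi0b pi1b gamb (Rmin ((S + Ebau pi0b pi1b / rho pi1b gamb) / 2) lam)) /\
  demand pi0b pi1b gamb (Rmin ((S + Ebau pi0b pi1b / rho pi1b gamb) / 2) lam) =
     Rmax ((Ebau pi0b pi1b - S * rho pi1b gamb) / 2) (Ebau pi0b pi1b - lam * rho pi1b gamb).
Proof.
  intros _ HS _ Hpi1c Hgamc Hc _ Hpi1b Hgamb Hb.
  pose proof (rho_pos _ _ Hpi1c Hgamc) as Hrc.
  pose proof (rho_pos _ _ Hpi1b Hgamb) as Hrb.
  assert (HSr : S * rho pi1b gamb < Ebau pi0b pi1b) by nra.
  set (P0 := (S + Ebau pi0b pi1b / rho pi1b gamb) / 2).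
  assert (HSP0 : S < P0) by (apply spot_lt_price_vertex; assumption).
  assert (HPmin : S <= Rmin P0 lam <= lam)
    by (unfold Rmin; destruct (Rle_dec P0 lam); lra).
  split; [split; [| split; reflexivity] | split; [| split]].
  - apply demand_is_optimal; unfold Pc; [exact Hpi1c | exact Hgamc | lra | nra].
  - intros P; apply is_intermediated_price_iff; [exact Hrb | lra | exact HSr].
  - apply demand_is_optimal; [exact Hpi1b | exact Hgamb | lra | nra].
  - rewrite demand_Rmin by exact Hrb.
    f_equal; unfold demand, P0; field; lra.
Qed.
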